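(* Let $G$ be a residually finite group and let $A$ be a finite set. Suppose that $X \subset A^G$ is a strongly irreducible subshift of finite type and that there exists a periodic configuration in $X$. Then the set of periodic configurations of $X$ is dense in $X$.
   Context: $A^G=\{x\colon G\to A\}$ carries the prodiscrete topology (product of discrete topologies) and the $G$-shift action $(gx)(h)=x(g^{-1}h)$ for $g,h\in G$. A subshift is a closed $G$-invariant subset of $A^G$. A configuration $x$ is periodic if its $G$-orbit is finite. For a finite $\Omega\subset G$ and $x\in A^G$, $x|_\Omega$ denotes the restriction. A subshift $X$ is of finite type if there are a finite $\Omega\subset G$ and $\mathcal P\subset A^\Omega$ with $X=\{x\in A^G : (gx)|_\Omega\in\mathcal P \text{ for all } g\in G\}$. For finite $\Delta\subset G$, $X$ is $\Delta$-irreducible if whenever $\Omega_1,\Omega_2$ are finite subsets of $G$ with $\Omega_1\Delta^{-1}\cap\Omega_2=\varnothing$ and $x_1,x_2\in X$, there is $x\in X$ with $x|_{\Omega_1}=x_1|_{\Omega_1}$ and $x|_{\Omega_2}=x_2|_{\Omega_2}$. $X$ is strongly irreducible if it is $\Delta$-irreducible for some finite $\Delta\subset G$. A group is residually finite if the intersection of its finite-index subgroups is trivial. *)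

From Stdlib Require List.
From HB Require Import structures.
From mathcomp Require Import all_boot.
From mathcomp Require Import monoid.
Set Implicit Arguments. Unset Strict Implicit. Unset Printing Implicit Defensive.

Local Open Scope group_scope.

Section Shifts.
Variables (G : groupType) (A : finType).

(* Configurations: A^G = G -> A. Finite subsets of G are represented by lists. *)

Definition shift (g : G) (x : G -> A) : G -> A := fun h => x (g^-1 * h).

Definition agree_on (Omega : seq G) (x y : G -> A) : Prop :=
  forall h, h \in Omega -> x h = y h.

Definition cylinder (Omega : seq G) (x : G -> A) : (G -> A) -> Prop :=
  fun y => agree_on Omega x y.

Definition pd_open (U : (G -> A) -> Prop) : Prop :=
  forall x, U x -> exists Omega : seq G, forall y, cylinder Omega x y -> U y.

Definition pd_closed (X : (G -> A) -> Prop) : Prop :=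
  pd_open (fun x => ~ X x).

Definition dense_in (D X : (G -> A) -> Prop) : Prop :=
  (forall x, D x -> X x) /\
  forall U, pd_open U -> (exists x, X x /\ U x) -> exists y, D y /\ U y.

Definition shift_invariant (X : (G -> A) -> Prop) : Prop :=
  forall g x, X x -> X (shift g x).

Definition subshift (X : (G -> A) -> Prop) : Prop :=
  pd_closed X /\ shift_invariant X.

Definition periodic (x : G -> A) : Prop :=
  exists s : seq (G -> A), forall g, List.In (shift g x) s.

Definition restr (Omega : seq G) (x : G -> A) : seq A := map x Omega.

Definition finite_type (X : (G -> A) -> Prop) : Prop :=
  exists (Omega : seq G) (P : seq A -> Prop),
    forall x, X x <-> (forall g, P (restr Omega (shift g x))).

Definition irreducible_wrt (Delta : seq G) (X : (G -> A) -> Prop) : Prop :=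
  forall Omega1 Omega2 : seq G,
    (forall a d, a \in Omega1 -> d \in Delta -> (a * d^-1) \notin Omega2) ->
    forall x1 x2, X x1 -> X x2 ->
      exists x, X x /\ agree_on Omega1 x x1 /\ agree_on Omega2 x x2.

Definition strongly_irreducible (X : (G -> A) -> Prop) : Prop :=
  exists Delta : seq G, irreducible_wrt Delta X.

End Shifts.

Section ResFin.
Variable G : groupType.
Local Open Scope group_scope.

Definition is_subgroup (H : G -> Prop) : Prop :=
  H 1 /\ (forall a b, H a -> H b -> H (a * b)) /\ (forall a, H a -> H a^-1).

Definition finite_index (H : G -> Prop) : Prop :=
  exists s : seq G, forall g, exists2 t, t \in s & H (t^-1 * g).

Definition residually_finite : Prop :=
  forall g : G, (forall H, is_subgroup H -> finite_index H -> H g) -> g = 1.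

End ResFin.

From HB Require Import structures.
From mathcomp Require Import all_boot.
From mathcomp Require Import monoid.
From mathcomp Require Import boolp.
Set Implicit Arguments. Unset Strict Implicit. Unset Printing Implicit Defensive.

(* Glue a configuration x of X, on a finite window E, to the periodic point p
   by strong irreducibility: the result z agrees with x on E and with p on a
   finite collar C \ C0 around C0 = E u E Delta^-1.  Residual finiteness gives a
   finite-index subgroup N, inside the stabilizer of p, whose translates N c
   (c in C) are pairwise distinct.  Copying z on each coset N c and p elsewhere
   gives an N-invariant, hence periodic, configuration y that agrees with x on E.
   Each window of y of the finite-type shape M is either a window of a translate
   of z (if it meets some N c0, c0 in C0, since C contains C0 M^-1 M) or a window
   of a translate of p, so y lies in X. *)

Local Open Scope group_scope.

Lemma InP (T : eqType) (t : T) (s : seq T) : reflect (List.In t s) (t \in s).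
Proof.
elim: s => [|a s IH] /=; first by right.
rewrite inE; apply: (iffP orP) => [[/eqP ->|/IH]|[->|/IH]]; by [left|right].
Qed.

Section ShiftAction.
Variables (G : groupType) (A : finType).
Implicit Types (g h k : G) (x : G -> A).

Lemma shiftM g h x : shift g (shift h x) = shift (g * h) x.
Proof. by apply: funext => u; rewrite /shift invgM mulgA. Qed.

Lemma shift1 x : shift 1 x = x.
Proof. by apply: funext => u; rewrite /shift invg1 mul1g. Qed.

Definition stabilizer x : G -> Prop := fun g => shift g x = x.

Lemma stabilizerP x k h : stabilizer x k -> x (k * h) = x h.
Proof. by move=> /(congr1 (@^~ (k * h))); rewrite /shift mulKg. Qed.

Lemma is_subgroup_stabilizer x : is_subgroup (stabilizer x).
Proof.
split; first exact: shift1.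
split; first by move=> a b Ha Hb; rewrite /stabilizer -shiftM Hb Ha.
by move=> a Ha; rewrite /stabilizer -{1}Ha shiftM mulVg shift1.
Qed.

Lemma finite_type_windows (M : seq G) (P : seq A -> Prop) X y :
    (forall x, X x <-> forall g, P (restr M (shift g x))) ->
    (forall g, exists2 x, X x & exists g', restr M (shift g y) = restr M (shift g' x)) ->
  X y.
Proof.
move=> XP windows; apply/XP => g.
have [x Xx [g' ->]] := windows g.
exact: (proj1 (XP x) Xx).
Qed.

End ShiftAction.

Section FiniteIndex.
Variable G : groupType.
Implicit Types (H K N : G -> Prop).

Definition witness (T : Type) (Q : T -> G -> Prop) (a : T) : G :=
  if pselect (exists g, Q a g) is left ex then projT1 (cid ex) else 1.

Lemma witnessP (T : Type) (Q : T -> G -> Prop) a :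
  (exists g, Q a g) -> Q a (witness Q a).
Proof. by rewrite /witness; case: pselect => // ex _; apply: projT2. Qed.

Lemma is_subgroupI H K :
  is_subgroup H -> is_subgroup K -> is_subgroup (fun g => H g /\ K g).
Proof.
move=> [H1 [HM HV]] [K1 [KM KV]]; split=> //; split.
  by move=> a b [Ha Ka] [Hb Kb]; split; [apply: HM | apply: KM].
by move=> a [Ha Ka]; split; [apply: HV | apply: KV].
Qed.

Lemma is_subgroup_lcoset_trans H t r g :
  is_subgroup H -> H (t^-1 * r) -> H (t^-1 * g) -> H (r^-1 * g).
Proof.
move=> [_ [HM HV]] Htr Htg.
have -> : r^-1 * g = (t^-1 * r)^-1 * (t^-1 * g) by rewrite invgM invgK mulgA mulgK.
exact: HM (HV _ Htr) Htg.
Qed.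

Lemma is_subgroup_rcoset_trans H h a b :
  is_subgroup H -> H (h * a^-1) -> H (h * b^-1) -> H (a * b^-1).
Proof.
move=> [_ [HM HV]] Hha Hhb.
have -> : a * b^-1 = (h * a^-1)^-1 * (h * b^-1) by rewrite invgM invgK mulgA mulgVK.
exact: HM (HV _ Hha) Hhb.
Qed.

Lemma finite_indexI H K : is_subgroup H -> is_subgroup K ->
  finite_index H -> finite_index K -> finite_index (fun g => H g /\ K g).
Proof.
move=> H_sub K_sub [s1 Hs1] [s2 Ks2].
(* one representative for each nonempty intersection of cosets t1 H and t2 K *)
pose Q (t : G * G) r := H (t.1^-1 * r) /\ K (t.2^-1 * r).
exists [seq witness Q t | t <- [seq (t1, t2) | t1 <- s1, t2 <- s2]] => g.
have [t1 t1s Hg] := Hs1 g; have [t2 t2s Kg] := Ks2 g.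
have [Hr Kr] : Q (t1, t2) (witness Q (t1, t2)) by apply: witnessP; exists g.
exists (witness Q (t1, t2)); first by rewrite map_f ?allpairs_f.
by split; [exact: is_subgroup_lcoset_trans H_sub Hr Hg | exact: is_subgroup_lcoset_trans K_sub Kr Kg].
Qed.

Lemma periodic_stabilizer_finite_index (A : finType) (x : G -> A) :
  periodic x -> finite_index (stabilizer x).
Proof.
move=> [s orbit]; pose Q (f : G -> A) r := shift r x = f.
exists [seq witness Q f | f <- s] => g.
have Qg : Q (shift g x) (witness Q (shift g x)) by apply: witnessP; exists g.
exists (witness Q (shift g x)); first by apply/InP; apply: List.in_map.
move: (witness Q _) Qg => t; rewrite /Q => Qt.
by rewrite /stabilizer -shiftM -Qt shiftM mulVg shift1.
Qed.

Lemma residually_finite_separating : residually_finite G -> forall S : seq G,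
  exists K, is_subgroup K /\ finite_index K /\ forall a, a \in S -> K a -> a = 1.
Proof.
move=> RF; elim=> [|a S [K [K_sub [K_fin K_sep]]]].
  exists (fun=> True); split; first by do !split.
  by split=> //; exists [:: 1] => g; exists 1; rewrite ?inE.
have [H [H_sub [H_fin Ha]]] : exists H, is_subgroup H /\ finite_index H /\ (H a -> a = 1).
  have [-> | a1] := eqVneq a 1; first by exists K.
  apply: contrapT => noH; case/eqP: a1; apply: RF => H H_sub H_fin.
  by apply: contrapT => nHa; apply: noH; exists H.
exists (fun g => K g /\ H g); split; first exact: is_subgroupI.
split; first exact: finite_indexI.
by move=> b; rewrite inE => /predU1P[-> [_] | bS [Kb _]]; [exact: Ha | exact: K_sep].
Qed.

Lemma periodic_of_invariant (A : finType) N (y : G -> A) :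
    is_subgroup N -> finite_index N -> (forall k h, N k -> y (k * h) = y h) ->
  periodic y.
Proof.
move=> [_ [_ NV]] [s Ns] yN.
exists [seq shift t y | t <- s] => g.
have [t ts Ntg] := Ns g.
suff -> : shift g y = shift t y by apply: (List.in_map (fun t => shift t y)); apply/InP.
apply: funext => h; rewrite /shift.
have -> : g^-1 * h = (t^-1 * g)^-1 * (t^-1 * h) by rewrite invgM invgK mulgA mulgK.
exact: yN _ _ (NV _ Ntg).
Qed.

End FiniteIndex.

Section Periodization.
Variables (G : groupType) (A : finType) (N : G -> Prop) (C : seq G) (z p : G -> A).
Hypothesis N_subgroup : is_subgroup N.
Hypothesis N_separates : forall c c', c \in C -> c' \in C -> N (c * c'^-1) -> c = c'.
Hypothesis N_fixes_p : forall k, N k -> stabilizer p k.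

Definition in_coset (h c : G) : bool := `[< N (h * c^-1) >].

Definition periodize (h : G) : A :=
  if has (in_coset h) C then z (nth 1 C (find (in_coset h) C)) else p h.

Lemma periodize_coset h c : c \in C -> N (h * c^-1) -> periodize h = z c.
Proof.
move=> cC Nhc; have hasC : has (in_coset h) C by apply/hasP; exists c => //; apply/asboolP.
rewrite /periodize hasC; congr z; apply: N_separates => //.
  by rewrite mem_nth // -has_find.
by apply: is_subgroup_rcoset_trans N_subgroup _ Nhc; apply/asboolP/(nth_find 1 hasC).
Qed.

Lemma periodize_on c : c \in C -> periodize c = z c.
Proof. by move=> cC; apply: periodize_coset; rewrite // mulgV; case: N_subgroup. Qed.

Lemma periodizeN k h : N k -> periodize (k * h) = periodize h.
Proof.
move=> Nk; have [_ [NM NV]] := N_subgroup.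
have same_coset : in_coset (k * h) =1 in_coset h.
  move=> c; apply/asboolP/asboolP => [|Nhc]; last by rewrite -mulgA; apply: NM.
  by move/(NM _ _ (NV _ Nk)); rewrite !mulgA mulVg mul1g.
by rewrite /periodize (eq_has same_coset) (eq_find same_coset) (stabilizerP _ (N_fixes_p Nk)).
Qed.

Lemma periodize_off (C0 : seq G) h :
    (forall c, c \in C -> c \notin C0 -> z c = p c) ->
    (forall c0, c0 \in C0 -> ~ N (h * c0^-1)) ->
  periodize h = p h.
Proof.
move=> zp offC0.
case: (pselect (exists2 c, c \in C & N (h * c^-1))) => [[c cC Nhc] | noC].
  rewrite (periodize_coset cC Nhc) zp //; last by apply/negP => /offC0.
  by rewrite -(mulgVK c h) (stabilizerP _ (N_fixes_p Nhc)).
rewrite /periodize; case: hasP => // -[c cC /asboolP Nhc].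
by case: noC; exists c.
Qed.

Lemma periodize_mem (X : (G -> A) -> Prop) (M : seq G) (P : seq A -> Prop) (C0 : seq G) :
    (forall x, X x <-> forall g, P (restr M (shift g x))) -> X z -> X p ->
    (forall c0 m w, c0 \in C0 -> m \in M -> w \in M -> c0 * m^-1 * w \in C) ->
    (forall c, c \in C -> c \notin C0 -> z c = p c) ->
  X periodize.
Proof.
move=> XP Xz Xp C0MM zp; apply: finite_type_windows XP _ => g.
case: (pselect (exists m c0, m \in M /\ c0 \in C0 /\ N (g^-1 * m * c0^-1)))
  => [[m [c0 [mM [c0C0 Ng]]]] | none].
  exists z => //; exists (m * c0^-1); apply/eq_in_map => w wM.
  rewrite /shift invgM invgK; apply: periodize_coset; first exact: C0MM.
  by rewrite !invgM !invgK !mulgA mulgK.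
exists p => //; exists g; apply/eq_in_map => w wM.
by apply: (periodize_off zp) => c0 c0C0 Nwc0; apply: none; exists w, c0.
Qed.

End Periodization.

Section Approximation.
Variables (G : groupType) (A : finType).

Lemma dense_in_of_approximation (D X : (G -> A) -> Prop) :
    (forall x, D x -> X x) ->
    (forall x, X x -> forall E : seq G, exists y, D y /\ agree_on E x y) ->
  dense_in D X.
Proof.
move=> DX approx; split=> // U U_open [x [Xx Ux]].
have [E EU] := U_open x Ux; have [y [Dy xy]] := approx x Xx E.
by exists y; split=> //; apply: EU.
Qed.

Lemma periodic_approximation (X : (G -> A) -> Prop) (p : G -> A) :
    residually_finite G -> finite_type X -> strongly_irreducible X ->
    X p -> periodic p ->
  forall x, X x -> forall E : seq G, exists y, (X y /\ periodic y) /\ agree_on E x y.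
Proof.
move=> RF [M [P XP]] [Delta irr] Xp p_per x Xx E.
pose C0 := E ++ [seq e * d^-1 | e <- E, d <- Delta].
pose C := C0 ++ [seq c0 * mw | c0 <- C0, mw <- [seq m^-1 * w | m <- M, w <- M]].
have [z [Xz [zx zp]]] : exists z, X z /\ agree_on E z x /\ agree_on [seq c <- C | c \notin C0] z p.
  apply: irr Xx Xp => e d eE dD; rewrite mem_filter mem_cat negb_and negbK.
  by rewrite (allpairs_f (fun e d => e * d^-1)) ?orbT.
have [K [K_sub [K_fin K_sep]]] :=
  residually_finite_separating RF [seq c * c'^-1 | c <- C, c' <- C].
pose N g := stabilizer p g /\ K g.
have N_sub : is_subgroup N := is_subgroupI (is_subgroup_stabilizer p) K_sub.
have N_sep c c' : c \in C -> c' \in C -> N (c * c'^-1) -> c = c'.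
  move=> cC c'C [_ Kcc']; apply/eqP; rewrite -divg_eq1; apply/eqP.
  exact: K_sep (allpairs_f _ cC c'C) Kcc'.
have N_fix k : N k -> stabilizer p k by case.
exists (periodize N C z p); split; first split.
- apply: (periodize_mem N_sub N_sep N_fix (C0 := C0) XP Xz Xp) => [c0 m w c0C0 mM wM | c cC cC0].
    rewrite mem_cat -mulgA; apply/orP; right.
    by apply: (allpairs_f (fun c0 mw => c0 * mw)) => //; apply: (allpairs_f (fun m w => m^-1 * w)).
  by apply: zp; rewrite mem_filter cC0.
- apply: (periodic_of_invariant N_sub); last exact: periodizeN.
  exact: finite_indexI (is_subgroup_stabilizer p) K_sub
    (periodic_stabilizer_finite_index p_per) K_fin.
- by move=> e eE; rewrite periodize_on ?zx // !mem_cat eE.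
Qed.

End Approximation.

Theorem theorem1p1 (G : groupType) (A : finType) (X : (G -> A) -> Prop) :
  residually_finite G ->
  subshift X -> finite_type X -> strongly_irreducible X ->
  (exists x, X x /\ periodic x) ->
  dense_in (fun x => X x /\ periodic x) X.
Proof.
move=> RF _ X_ft X_irr [p [Xp p_per]].
apply: dense_in_of_approximation => [x [] // | ].
exact: periodic_approximation X_ft X_irr Xp p_per.
Qed.
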